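(* For $k\geq 1$ define the formal power series $$\psi_k(t)=\mu(k)\,(z_2;q)_k\sum_{j=k}^{\infty}\frac{(q^{j-k+1};q)_k}{(q^jz_2;q)_k}\,t^j,\qquad \mu(k)=(-1)^k\frac{q^{\binom{k}{2}}}{(q;q)_k}\,\frac{1-q^{2k-1}z_2}{1-q^{k-1}z_2},$$ and let $f_k(t)=\sum_{j\geq k}\rho(k,j)t^j$ for $k\geq 0$, where $\rho(k,j)=m_j/v'_{j+1}(x_k)$. Then for every $k\geq 1$, $f_k(t)$ is the Hadamard (coefficientwise) product of $f_0(t)$ and $\psi_k(t)$, i.e. $\rho(k,j)$ equals $\rho(0,j)$ times the coefficient of $t^j$ in $\psi_k(t)$, for all $j\geq k$.
   Context: Fix $q\in\mathbb{C}$ with $q\neq 0$ and $|q|\neq 1$. Fix complex parameters $a_1,a_2,b_0,b_1,b_2,s_1,s_2$ with $a_2\neq0$, $b_2\neq0$, put $s_0=-s_1-s_2$, and for $k\geq 0$ define $x_k=b_0+b_1q^k+b_2q^{-k}$, $h_k=a_1q^k+a_2q^{-k}$, $d_k=s_0+s_1q^k+s_2q^{-k}$; assume the $h_k$ are pairwise distinct and the $x_k$ are pairwise distinct. Let $g_0=0$ and $g_k=x_{k-1}(h_k-h_0)+d_k$ for $k\geq 1$. Let $v_n(t)=\prod_{i=0}^{n-1}(t-x_i)$, so $v_{j+1}'(x_k)=\prod_{i=0,\,i\neq k}^{j}(x_k-x_i)$. Define $m_0=1$, $m_j=\prod_{i=1}^{j}\frac{g_i}{h_0-h_i}$. Put $z_2=qb_1/b_2$.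 $(t;q)_k=\prod_{i=0}^{k-1}(1-q^it)$. *)

From HB Require Import structures.
From mathcomp Require Import all_boot all_order all_algebra.
Set Implicit Arguments. Unset Strict Implicit. Unset Printing Implicit Defensive.
Import Order.TTheory GRing.Theory Num.Theory.
Local Open Scope ring_scope.

(* Complex numbers are modelled by an arbitrary numClosedFieldType C
   (the complex numbers are an instance). *)
Section Defs.
Variable C : numClosedFieldType.
Variables (q a1 a2 b0 b1 b2 s1 s2 : C).

Definition s0 : C := - s1 - s2.
Definition xk (k : nat) : C := b0 + b1 * q ^+ k + b2 * q ^- k.
Definition hk (k : nat) : C := a1 * q ^+ k + a2 * q ^- k.
Definition dk (k : nat) : C := s0 + s1 * q ^+ k + s2 * q ^- k.
Definition gk (k : nat) : C :=
  if k is k'.+1 then xk k' * (hk k - hk 0) + dk k else 0.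
Definition mj (j : nat) : C := \prod_(1 <= i < j.+1) (gk i / (hk 0 - hk i)).
(* v'_{j+1}(x_k) = prod_{i=0, i<>k}^{j} (x_k - x_i) *)
Definition vprime (j k : nat) : C :=
  \prod_(0 <= i < j.+1 | i != k) (xk k - xk i).
Definition rho (k j : nat) : C := mj j / vprime j k.
(* coefficient of t^j in f_k(t) *)
Definition fcoef (k j : nat) : C := if (k <= j)%N then rho k j else 0.

Definition z2 : C := q * b1 / b2.
Definition qpoch (t : C) (k : nat) : C := \prod_(i < k) (1 - q ^+ i * t).
Definition mu (k : nat) : C :=
  (-1) ^+ k * q ^+ 'C(k, 2) / qpoch q k
  * ((1 - q ^+ (k.*2.-1) * z2) / (1 - q ^+ k.-1 * z2)).
(* coefficient of t^j in psi_k(t) *)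
Definition psicoef (k j : nat) : C :=
  if (k <= j)%N then
    mu k * qpoch z2 k * (qpoch (q ^+ (j - k).+1) k / qpoch (q ^+ j * z2) k)
  else 0.
End Defs.

From HB Require Import structures.
From mathcomp Require Import all_boot all_order all_algebra.
From mathcomp Require Import ring zify.
Import Order.TTheory GRing.Theory Num.Theory.
Local Open Scope ring_scope.

(* Since rho(k,j) = m_j / v'_{j+1}(x_k), the factor m_j cancels and the claim
   is v'_{j+1}(x_0) = v'_{j+1}(x_k) psi_k[j] for j >= k: a statement about the
   nodes x_i alone.  The nodes factor as
     x_k - x_i = (q^k - q^i) (b1 - b2 q^-(k+i))
               = - b2 q^-(k+i) (q^k - q^i) (1 - q^(k+i-1) z2),
   so both products are q-Pochhammer symbols.  At j = k this gives closed
   forms on both sides; passing from j to j+1 multiplies v'(x_0) / v'(x_k) by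
   (x_0 - x_{j+1}) / (x_k - x_{j+1}), which is exactly the ratio of
   consecutive coefficients of psi_k.  Injectivity of k |-> x_k makes every
   factor 1 - q^n (n > 0) and 1 - q^n z2 nonzero. *)

Section QPochhammer.
Variables (C : numClosedFieldType) (q : C).

Lemma qpochSr (t : C) k : qpoch q t k.+1 = qpoch q t k * (1 - q ^+ k * t).
Proof. by rewrite /qpoch big_ord_recr. Qed.

Lemma qpoch_shift (t : C) k :
  (1 - t) * qpoch q (q * t) k = qpoch q t k * (1 - q ^+ k * t).
Proof.
rewrite -qpochSr /qpoch big_ord_recl /= expr0 mul1r; congr (_ * _).
by apply: eq_bigr => i _; rewrite mulrA -exprSr.
Qed.

Lemma qpoch_neq0 (t : C) k :
  (forall i, (i < k)%N -> 1 - q ^+ i * t != 0) -> qpoch q t k != 0.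
Proof. by move=> t_ok; apply/prodf_neq0 => i _; apply: t_ok. Qed.

Lemma prod_expr_subr k :
  \prod_(i < k) (q ^+ k - q ^+ i) = (-1) ^+ k * q ^+ 'C(k, 2) * qpoch q q k.
Proof.
elim: k => [|k IHk]; first by rewrite big_ord0 /qpoch big_ord0 !expr0 !mul1r.
rewrite big_ord_recl (eq_bigr (fun i : 'I_k => q * (q ^+ k - q ^+ i))); last first.
  by move=> i _; rewrite /bump /= !exprS mulrBr.
rewrite big_split /= prodr_const card_ord IHk qpochSr binS bin1 exprD !exprS expr0.
ring.
Qed.

End QPochhammer.

Lemma bin2_double n : ('C(n, 2) * 2 + n = n * n)%N.
Proof. by elim: n => // n IHn; rewrite binS bin1; nia. Qed.

Section Nodes.
Variables (C : numClosedFieldType) (q b0 b1 b2 : C).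
Hypotheses (q_neq0 : q != 0) (b2_neq0 : b2 != 0).

Local Notation x := (xk q b0 b1 b2).
Local Notation z := (z2 q b1 b2).
Local Notation v := (vprime q b0 b1 b2).
Local Notation qp := (qpoch q).
Local Notation psi := (psicoef q b1 b2).

Lemma expq_neq0 n : q ^+ n != 0. Proof. exact: expf_neq0. Qed.

Lemma xk_sub k i : x k - x i = (q ^+ k - q ^+ i) * (b1 - b2 / q ^+ (k + i)).
Proof.
rewrite /xk exprD; field.
by rewrite !expq_neq0.
Qed.

Lemma b1_sub_z2 m : b1 - b2 / q ^+ m.+1 = - (b2 / q ^+ m.+1) * (1 - q ^+ m * z).
Proof. by rewrite /z2 exprS; field; rewrite q_neq0 expq_neq0 b2_neq0. Qed.

Lemma prod_b1_sub m k :
  \prod_(i < k) (b1 - b2 / q ^+ (m.+1 + i))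
  = (- b2) ^+ k / q ^+ (m.+1 * k + 'C(k, 2)) * qp (q ^+ m * z) k.
Proof.
rewrite (eq_bigr (fun i : 'I_k =>
    - b2 * (q ^+ (m.+1 + i))^-1 * (1 - q ^+ i * (q ^+ m * z)))); last first.
  by move=> i _; rewrite addSn b1_sub_z2 mulrA -exprD (addnC i m) !mulNr.
rewrite !big_split /= prodr_const card_ord prodfV prodrXr.
by rewrite big_split /= sum_nat_const card_ord -bin2_sum big_mkord mulnC.
Qed.

Lemma vprimeS j k : (k <= j)%N -> v j.+1 k = v j k * (x k - x j.+1).
Proof.
move=> le_kj; rewrite /vprime big_mkcond big_nat_recr //= -big_mkcond ifT //.
by rewrite eq_sym neq_ltn ltnS le_kj.
Qed.

Lemma vprime_diag k : (0 < k)%N ->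
  v k k = (-1) ^+ k * q ^+ 'C(k, 2) * qp q k
          * ((- b2) ^+ k / q ^+ (k * k + 'C(k, 2)) * qp (q ^+ k.-1 * z) k).
Proof.
case: k => // k _; rewrite /vprime big_mkcond big_nat_recr //= eqxx mulr1 big_mkord.
rewrite (eq_bigr (fun i : 'I_k.+1 =>
    (q ^+ k.+1 - q ^+ i) * (b1 - b2 / q ^+ (k.+1 + i)))); last first.
  by move=> i _; rewrite ifT ?neq_ltn ?ltn_ord // xk_sub.
by rewrite big_split /= prod_expr_subr prod_b1_sub.
Qed.

Lemma vprime_0 k :
  v k 0 = qp q k * ((- b2) ^+ k / q ^+ (k + 'C(k, 2)) * qp z k).
Proof.
rewrite /vprime big_mkcond big_nat_recl //= mul1r big_mkord.
rewrite (eq_bigr (fun i : 'I_k =>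
    (1 - q ^+ i * q) * (b1 - b2 / q ^+ (1 + i)))); last first.
  by move=> i _; rewrite xk_sub expr0 add0n add1n exprSr.
by rewrite big_split /= prod_b1_sub expr0 mul1r mul1n.
Qed.

Hypothesis x_inj : injective x.

Lemma one_sub_expq_neq0 n : (0 < n)%N -> 1 - q ^+ n != 0.
Proof.
move=> n_gt0; apply/eqP => qn1; have : x n = x 0.
  by apply/eqP; rewrite -subr_eq0 xk_sub expr0 -opprB qn1 oppr0 mul0r.
by move/x_inj => n0; rewrite n0 in n_gt0.
Qed.

Lemma one_sub_expq_z2_neq0 n : 1 - q ^+ n * z != 0.
Proof.
apply/eqP => qnz; have : x n.+1 = x 0.
  by apply/eqP; rewrite -subr_eq0 xk_sub addn0 b1_sub_z2 qnz !mulr0.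
by move/x_inj.
Qed.

Lemma qpoch_z2_neq0 m k : qp (q ^+ m * z) k != 0.
Proof.
by apply: qpoch_neq0 => i _; rewrite mulrA -exprD one_sub_expq_z2_neq0.
Qed.

Lemma qpoch_expq_neq0 m k : qp (q ^+ m.+1) k != 0.
Proof.
by apply: qpoch_neq0 => i _; rewrite -exprD addnS one_sub_expq_neq0.
Qed.

Lemma vprime_neq0 j k : v j k != 0.
Proof.
rewrite prodf_seq_neq0; apply/allP => i _; apply/implyP => ik.
by rewrite subr_eq0; apply/eqP => /x_inj ki; rewrite ki eqxx in ik.
Qed.

(* The factor (1 - q^(2k-1) z2) / (1 - q^(k-1) z2) in mu turns
   (z2;q)_k / (q^k z2;q)_k into (z2;q)_k / (q^(k-1) z2;q)_k. *)
Lemma psicoef_diag k : (0 < k)%N ->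
  psi k k = (-1) ^+ k * q ^+ 'C(k, 2) * qp z k / qp (q ^+ k.-1 * z) k.
Proof.
case: k => // k _; rewrite /psicoef leqnn subnn expr1 /mu /=.
have shift := @qpoch_shift _ q (q ^+ k * z) k.+1.
rewrite mulrA -exprS mulrA -exprD in shift.
have -> : k.*2.+1 = (k.+1 + k)%N by rewrite -addnn addSn.
move: (one_sub_expq_z2_neq0 k) (qpoch_z2_neq0 k k.+1) (qpoch_expq_neq0 0 k.+1).
rewrite expr1 => zk qk qq.
have -> : qp (q ^+ k.+1 * z) k.+1
        = qp (q ^+ k * z) k.+1 * (1 - q ^+ (k.+1 + k) * z) / (1 - q ^+ k * z).
  by rewrite -shift; field.
by field; rewrite zk qk qq one_sub_expq_z2_neq0.
Qed.

Lemma vprime_0_diag k : (0 < k)%N -> v k 0 = v k k * psi k k.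
Proof.
move=> k_gt0; rewrite vprime_0 vprime_diag // psicoef_diag //.
have -> : (k * k + 'C(k, 2) = k + 'C(k, 2) + 'C(k, 2) + 'C(k, 2))%N.
  by have := bin2_double k; nia.
have sign2 : (-1) ^+ k * (-1) ^+ k = 1 :> C.
  by rewrite -exprD addnn -mul2n exprM sqrrN !expr1n.
set s := (-1) ^+ k in sign2 *; rewrite -[LHS]mulr1 -sign2 !exprD; field.
by rewrite qpoch_z2_neq0 !expq_neq0.
Qed.

Lemma psicoefS k j : (k <= j)%N ->
  psi k j.+1 = psi k j * ((1 - q ^+ j.+1) / (1 - q ^+ (j - k).+1))
                       * ((1 - q ^+ j * z) / (1 - q ^+ (j + k) * z)).
Proof.
move=> le_kj; rewrite /psicoef le_kj (leqW le_kj) subSn //.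
have shift_q := @qpoch_shift _ q (q ^+ (j - k).+1) k.
have shift_z := @qpoch_shift _ q (q ^+ j * z) k.
rewrite -exprS -exprD addnS subnKC // in shift_q.
rewrite mulrA -exprS mulrA -exprD addnC in shift_z.
move: (@one_sub_expq_neq0 (j - k).+1 isT) (one_sub_expq_z2_neq0 j) => qjk zj.
move: (one_sub_expq_z2_neq0 (j + k)) (qpoch_z2_neq0 j k) => zjk qz.
have -> : qp (q ^+ (j - k).+2) k
        = qp (q ^+ (j - k).+1) k * (1 - q ^+ j.+1) / (1 - q ^+ (j - k).+1).
  by rewrite -shift_q; field.
have -> : qp (q ^+ j.+1 * z) k = qp (q ^+ j * z) k * (1 - q ^+ (j + k) * z) / (1 - q ^+ j * z).
  by rewrite -shift_z; field.
by field; rewrite qjk zj zjk qz.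
Qed.

Lemma vprime_0_step k j : (k <= j)%N ->
  x 0 - x j.+1 = (x k - x j.+1) * ((1 - q ^+ j.+1) / (1 - q ^+ (j - k).+1))
                                * ((1 - q ^+ j * z) / (1 - q ^+ (j + k) * z)).
Proof.
move=> le_kj; rewrite !xk_sub add0n addnS (addnC k j) !b1_sub_z2 expr0.
have -> : q ^+ k - q ^+ j.+1 = q ^+ k * (1 - q ^+ (j - k).+1).
  by rewrite mulrBr mulr1 -exprD -subSn // subnKC // ltnW.
rewrite -addSn exprD; field.
by rewrite one_sub_expq_neq0 // one_sub_expq_z2_neq0 !expq_neq0.
Qed.

Lemma vprime_0_psicoef k j : (0 < k <= j)%N -> v j 0 = v j k * psi k j.
Proof.
case/andP=> k_gt0 /subnKC <-; elim: (j - k)%N => [|n IHn].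
  by rewrite addn0 vprime_0_diag.
rewrite addnS vprimeS // vprimeS ?leq_addr // psicoefS ?leq_addr // IHn.
by rewrite (vprime_0_step k) ?leq_addr //; ring.
Qed.

End Nodes.

Theorem mainTheorem5 (C : numClosedFieldType) (q a1 a2 b0 b1 b2 s1 s2 : C) :
  q != 0 -> `|q| != 1 -> a2 != 0 -> b2 != 0 ->
  injective (hk q a1 a2) ->
  injective (xk q b0 b1 b2) ->
  forall k : nat, (1 <= k)%N ->
  forall j : nat,
    fcoef q a1 a2 b0 b1 b2 s1 s2 k j
    = fcoef q a1 a2 b0 b1 b2 s1 s2 0 j * psicoef q b1 b2 k j.
Proof.
move=> q_neq0 _ _ b2_neq0 _ x_inj k k_gt0 j.
rewrite /fcoef leq0n; case: (leqP k j) => [le_kj | lt_jk]; last first.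
  by rewrite /psicoef leqNgt lt_jk mulr0.
have v0_eq : vprime q b0 b1 b2 j 0 = vprime q b0 b1 b2 j k * psicoef q b1 b2 k j.
  by apply: vprime_0_psicoef => //; rewrite k_gt0.
have : vprime q b0 b1 b2 j 0 != 0 by apply: vprime_neq0.
rewrite v0_eq mulf_eq0 negb_or => /andP [vk_neq0 psi_neq0].
by rewrite /rho v0_eq; field; rewrite vk_neq0 psi_neq0.
Qed.
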